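(* Let $\mathcal{O}$ be a small category, let $n\ge 0$, and let $\sigma\colon\Delta[n]\to N\mathcal{O}$ correspond to the sequence $\sigma_0\xrightarrow{g_1}\sigma_1\to\cdots\xrightarrow{g_n}\sigma_n$ in $\mathcal{O}$. Let $A\subset\Delta[n]$ be a simplicial subset containing the face opposite the vertex $0$, and let $\lambda$ be the composite $A\hookrightarrow\Delta[n]\xrightarrow{\sigma}N\mathcal{O}$. Then the square of contravariant functors $\mathcal{O}\to\mathcal{S}$ $$\begin{array}{ccc}\mathcal{O}(-,\sigma_0)\times A & \longrightarrow & F\lambda\\ \downarrow & & \downarrow\\ \mathcal{O}(-,\sigma_0)\times\Delta[n] & \xrightarrow{\iota_n} & F\sigma\end{array}$$ is a pushout, where the top map is the restriction of $\iota_n$, the left map is induced by the inclusion $A\subset\Delta[n]$, and the right map is induced by the inclusion $A\subset \Delta[n]$ over $N\mathcal{O}$.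
   Context: $\mathcal{S}$ is the category of simplicial sets, $N$ the nerve, $\Delta[n]$ the standard $n$-simplex (nerve of the poset $[n]=\{0<\dots<n\}$), $\mathcal{O}(b,c)$ the hom-set of $\mathcal{O}$ and $\mathcal{O}(-,c)$ the representable contravariant set-valued functor (viewed as a discrete simplicial-set-valued functor). For $\phi\colon X\to N\mathcal{O}$ a simplicial set over $N\mathcal{O}$, $F\phi$ is the contravariant functor $\mathcal{O}\to\mathcal{S}$ with $(F\phi)(b)$ the pullback of $X\xrightarrow{\phi}N\mathcal{O}\leftarrow N(b{\downarrow}\mathcal{O})$ (where $b{\downarrow}\mathcal{O}$ is the category of objects under $b$ and the map is the forgetful one), functorial in $b$ via the functors $c{\downarrow}\mathcal{O}\to b{\downarrow}\mathcal{O}$ given by precomposition with $\beta\colon b\to c$. A $k$-simplex of $(F\sigma)(b)$ is thus a pair $(\alpha,\omega)$ with $\alpha\colon[k]\to[n]$ order-preserving and $\omega=(b\to\sigma\alpha(0)\to\sigma\alpha(1)\to\cdots\to\sigma\alpha(k))$ a $k$-simplex of $N(b{\downarrow}\mathcal{O})$ whose maps after the first are $\sigma\alpha(i-1\to i)$. The map $\iota_n\colon\mathcal{O}(-,\sigma_0)\times\Delta[n]\to F\sigma$ sends $(g,\alpha)\in\mathcal{O}(b,\sigma_0)\times\Delta[n]_k$ to $(\alpha,\omega)$ with $\omega=(b\xrightarrow{\sigma(0\to\alpha(0))\circ g}\sigma\alpha(0)\xrightarrow{\sigma\alpha(0\to1)}\cdots\xrightarrow{\sigma\alpha(k-1\to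 k)}\sigma\alpha(k))$. *)

From Stdlib Require Import ProofIrrelevance FunctionalExtensionality.
From mathcomp Require Import all_boot.

Set Implicit Arguments.
Unset Strict Implicit.
Unset Printing Implicit Defensive.

Lemma sig_ext (T : Type) (P : T -> Prop) (a b : sig P) :
  proj1_sig a = proj1_sig b -> a = b.
Proof.
case: a => a pa; case: b => b pb /= E; subst b; f_equal; exact: proof_irrelevance.
Qed.

(* comp g f is "g after f".                                            *)
Record Cat := {
  Ob :> Type;
  Hom : Ob -> Ob -> Type;
  idm : forall a, Hom a a;
  comp : forall a b c, Hom b c -> Hom a b -> Hom a c;
  comp1m : forall a b (f : Hom a b), comp (idm b) f = f;
  compm1 : forall a b (f : Hom a b), comp f (idm a) = f;
  compA : forall a b c d (h : Hom c d) (g : Hom b c) (f : Hom a b),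
     comp h (comp g f) = comp (comp h g) f }.
Arguments Hom {_} _ _.
Arguments idm {_} _.
Arguments comp {_ _ _ _} _ _.
Arguments comp1m {_ _ _} _.
Arguments compm1 {_ _ _} _.
Arguments compA {_ _ _ _ _} _ _ _.

Record Functor (C D : Cat) := {
  fob :> C -> D;
  fmor : forall a b, Hom a b -> Hom (fob a) (fob b);
  fmor_id : forall a, fmor (idm a) = idm (fob a);
  fmor_comp : forall a b c (g : Hom b c) (f : Hom a b),
     fmor (comp g f) = comp (fmor g) (fmor f) }.
Arguments fmor {C D} _ {a b} _.

Definition hcast (C : Cat) (a a' b b' : C) (ea : a = a') (eb : b = b')
  (f : Hom a b) : Hom a' b' :=
  match ea in _ = a0 return Hom a0 b' with
  | erefl => match eb in _ = b0 return Hom a b0 with erefl => f end end.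

Lemma hcast_refl (C : Cat) (a b : C) (ea : a = a) (eb : b = b) (f : Hom a b) :
  hcast ea eb f = f.
Proof.
by rewrite (proof_irrelevance _ ea erefl) (proof_irrelevance _ eb erefl).
Qed.

(* The simplex category: maps [m] -> [n] are order-preserving maps      *)
(* 'I_m.+1 -> 'I_n.+1.                                                 *)
Definition Dmono_pred m n (f : 'I_m.+1 -> 'I_n.+1) : Prop :=
  forall i j : 'I_m.+1, i <= j -> f i <= f j.
Definition Dmor (m n : nat) := {f : 'I_m.+1 -> 'I_n.+1 | Dmono_pred f}.
Definition Dfun m n (a : Dmor m n) : 'I_m.+1 -> 'I_n.+1 := proj1_sig a.
Coercion Dfun : Dmor >-> Funclass.

Lemma Dmono m n (a : Dmor m n) (i j : 'I_m.+1) : i <= j -> a i <= a j.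
Proof. exact: (proj2_sig a). Qed.

Definition Did n : Dmor n n := exist (@Dmono_pred n n) (fun i => i) (fun i j h => h).
Definition Dcomp m n p (g : Dmor n p) (f : Dmor m n) : Dmor m p :=
  exist (@Dmono_pred m p) (fun i => g (f i)) (fun i j h => Dmono g (Dmono f h)).

Lemma Dmor_eq m n (a b : Dmor m n) : (forall i, a i = b i) -> a = b.
Proof.
case: a => a pa; case: b => b pb /= H; apply: sig_ext => /=.
exact: functional_extensionality.
Qed.

Record sSet := {
  sx :> nat -> Type;
  sact : forall m n, Dmor m n -> sx n -> sx m;
  sact_id : forall n (x : sx n), sact (Did n) x = x;
  sact_comp : forall m n p (f : Dmor m n) (g : Dmor n p) (x : sx p),
    sact (Dcomp g f) x = sact f (sact g x) }.
Arguments sact {_ _ _} _ _.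

Record sMap (X Y : sSet) := {
  smap :> forall k, X k -> Y k;
  smap_nat : forall m n (f : Dmor m n) (x : X n),
    smap (sact f x) = sact f (smap x) }.
Arguments smap {X Y} _ k _.

Definition smcomp_nat (X Y Z : sSet) (g : sMap Y Z) (f : sMap X Y) :
  forall m n (h : Dmor m n) (x : X n),
    g m (f m (sact h x)) = sact h (g n (f n x)).
Proof. by move=> m n h x; rewrite !smap_nat. Qed.
Definition smcomp (X Y Z : sSet) (g : sMap Y Z) (f : sMap X Y) : sMap X Z :=
  {| smap := fun k x => g k (f k x); smap_nat := smcomp_nat g f |}.

Definition smid (X : sSet) : sMap X X :=
  {| smap := fun k x => x; smap_nat := fun m n h x => erefl |}.

Lemma Delta_id n k (x : Dmor k n) : Dcomp x (Did k) = x.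
Proof. exact: Dmor_eq. Qed.
Lemma Delta_comp n m k p (f : Dmor m k) (g : Dmor k p) (x : Dmor p n) :
  Dcomp x (Dcomp g f) = Dcomp (Dcomp x g) f.
Proof. exact: Dmor_eq. Qed.
Definition Delta (n : nat) : sSet :=
  {| sx := fun k => Dmor k n;
     sact := fun m k f x => Dcomp x f;
     sact_id := @Delta_id n;
     sact_comp := @Delta_comp n |}.

Record SubS (X : sSet) := {
  smem : forall k, X k -> Prop;
  smem_act : forall m n (f : Dmor m n) (x : X n), smem x -> smem (sact f x) }.
Arguments smem {X} _ {k} _.

Section SubSet.
Variables (X : sSet) (A : SubS X).
Definition subs_act m n (f : Dmor m n) (x : {x : X n | smem A x}) :
  {x : X m | smem A x} :=
  exist _ (sact f (proj1_sig x)) (smem_act f (proj2_sig x)).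
Lemma subs_act_id n x : subs_act (Did n) x = x.
Proof. by apply: sig_ext; rewrite /= sact_id. Qed.
Lemma subs_act_comp m n p (f : Dmor m n) (g : Dmor n p) x :
  subs_act (Dcomp g f) x = subs_act f (subs_act g x).
Proof. by apply: sig_ext; rewrite /= sact_comp. Qed.
Definition subsSet : sSet :=
  {| sx := fun k => {x : X k | smem A x};
     sact := subs_act; sact_id := subs_act_id; sact_comp := subs_act_comp |}.
Definition incl : sMap subsSet X :=
  {| smap := fun k (x : subsSet k) => proj1_sig x; smap_nat := fun m n f x => erefl |}.
End SubSet.

Definition subS_le (X : sSet) (A B : SubS X) : Prop :=
  forall k (x : X k), smem A x -> smem B x.

(* The face of Delta[n] opposite the vertex 0: the simplices that do not
   contain the vertex 0 (the image of d^0 : Delta[n-1] -> Delta[n];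
   empty when n = 0). *)
Lemma face0_act n m k (f : Dmor m k) (x : Dmor k n) :
  (forall i, nat_of_ord (x i) <> 0) ->
  (forall i, nat_of_ord (Dcomp x f i) <> 0).
Proof. by move=> H i; apply: H. Qed.
Definition face0 (n : nat) : SubS (Delta n) :=
  @Build_SubS (Delta n) (fun k (x : Dmor k n) => forall i, nat_of_ord (x i) <> 0)
     (@face0_act n).

(* The nerve: a k-simplex of N C is a functor [k] -> C.                 *)
Record NSimp (C : Cat) (k : nat) := {
  nob : 'I_k.+1 -> C;
  nmor : forall i j : 'I_k.+1, i <= j -> Hom (nob i) (nob j);
  nmor_id : forall (i : 'I_k.+1) (h : i <= i), nmor h = idm (nob i);
  nmor_comp : forall (i j l : 'I_k.+1) (hij : i <= j) (hjl : j <= l)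
     (hil : i <= l), nmor hil = comp (nmor hjl) (nmor hij) }.
Arguments nob {C k} _ _.
Arguments nmor {C k} _ {i j} _.

Lemma nmor_pi C k (x : NSimp C k) (i j : 'I_k.+1) (h h' : i <= j) :
  nmor x h = nmor x h'.
Proof. by rewrite (eq_irrelevance h h'). Qed.

Lemma NSimp_ext C k (x y : NSimp C k) (e : forall i, nob x i = nob y i) :
  (forall (i j : 'I_k.+1) (h : i <= j), nmor y h = hcast (e i) (e j) (nmor x h)) -> x = y.
Proof.
case: x e => o m p1 p2; case: y => o' m' p1' p2' /= e H.
have E : o = o' := functional_extensionality _ _ e.
subst o'.
have He : forall i, e i = erefl by move=> i; apply: proof_irrelevance.
have Em : m = m'.
  apply: functional_extensionality_dep => i.
  apply: functional_extensionality_dep => j.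
  apply: functional_extensionality_dep => h.
  by rewrite H !He.
subst m'; f_equal; apply: proof_irrelevance.
Qed.

Section Nerve.
Variable C : Cat.

Definition nact m k (f : Dmor m k) (x : NSimp C k) : NSimp C m :=
  {| nob := fun i => nob x (f i);
     nmor := fun i j h => nmor x (Dmono f h);
     nmor_id := fun i h => nmor_id x (Dmono f h);
     nmor_comp := fun i j l hij hjl hil =>
        nmor_comp x (Dmono f hij) (Dmono f hjl) (Dmono f hil) |}.

Lemma nact_id k (x : NSimp C k) : nact (Did k) x = x.
Proof.
apply: (@NSimp_ext _ _ (nact (Did k) x) x (fun i => erefl)) => i j h /=; exact: nmor_pi.
Qed.

Lemma nact_comp m k p (f : Dmor m k) (g : Dmor k p) (x : NSimp C p) :
  nact (Dcomp g f) x = nact f (nact g x).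
Proof.
apply: (@NSimp_ext _ _ (nact (Dcomp g f) x) (nact f (nact g x)) (fun i => erefl)) => i j h /=; exact: nmor_pi.
Qed.

Definition Nerve : sSet :=
  {| sx := NSimp C; sact := nact; sact_id := nact_id; sact_comp := nact_comp |}.
End Nerve.

Section NerveMap.
Variables (C D : Cat) (F : Functor C D).

Lemma nfmap_id k (x : NSimp C k) (i : 'I_k.+1) (h : i <= i) :
  fmor F (nmor x h) = idm (F (nob x i)).
Proof. by rewrite nmor_id fmor_id. Qed.
Lemma nfmap_comp k (x : NSimp C k) (i j l : 'I_k.+1) (hij : i <= j) (hjl : j <= l)
  (hil : i <= l) :
  fmor F (nmor x hil) = comp (fmor F (nmor x hjl)) (fmor F (nmor x hij)).
Proof. by rewrite (nmor_comp x hij hjl hil) fmor_comp. Qed.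

Definition nfmap k (x : NSimp C k) : NSimp D k :=
  {| nob := fun i => F (nob x i);
     nmor := fun i j h => fmor F (nmor x h);
     nmor_id := nfmap_id x;
     nmor_comp := nfmap_comp x |}.

Lemma nfmap_nat m k (f : Dmor m k) (x : NSimp C k) :
  nfmap (nact f x) = nact f (nfmap x).
Proof.
by apply: (@NSimp_ext _ _ (nfmap (nact f x)) (nact f (nfmap x)) (fun i => erefl)).
Qed.

Definition NMap : sMap (Nerve C) (Nerve D) :=
  @Build_sMap (Nerve C) (Nerve D) nfmap nfmap_nat.
End NerveMap.

Section Under.
Variables (C : Cat) (b : C).

Definition UOb := {c : C & Hom b c}.
Definition UHom (x y : UOb) :=
  {g : Hom (projT1 x) (projT1 y) | comp g (projT2 x) = projT2 y}.

Definition Uid (x : UOb) : UHom x x := exist _ (idm _) (comp1m _).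

Lemma Ucomp_proof (x y z : UOb) (g : UHom y z) (f : UHom x y) :
  comp (comp (proj1_sig g) (proj1_sig f)) (projT2 x) = projT2 z.
Proof. by rewrite -compA (proj2_sig f) (proj2_sig g). Qed.
Definition Ucomp (x y z : UOb) (g : UHom y z) (f : UHom x y) : UHom x z :=
  exist _ (comp (proj1_sig g) (proj1_sig f)) (Ucomp_proof g f).

Lemma Ucomp1m x y (f : UHom x y) : Ucomp (Uid y) f = f.
Proof. by apply: sig_ext; rewrite /= comp1m. Qed.
Lemma Ucompm1 x y (f : UHom x y) : Ucomp f (Uid x) = f.
Proof. by apply: sig_ext; rewrite /= compm1. Qed.
Lemma UcompA x y z w (h : UHom z w) (g : UHom y z) (f : UHom x y) :
  Ucomp h (Ucomp g f) = Ucomp (Ucomp h g) f.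
Proof. by apply: sig_ext; rewrite /= compA. Qed.

Definition Under : Cat :=
  {| Ob := UOb; Hom := UHom; idm := Uid; comp := Ucomp;
     comp1m := Ucomp1m; compm1 := Ucompm1; compA := UcompA |}.

Definition Uforget : Functor Under C :=
  @Build_Functor Under C (fun x : UOb => projT1 x)
     (fun x y (g : UHom x y) => proj1_sig g)
     (fun x => erefl) (fun x y z g f => erefl).

Lemma sval_hcast (x x' y y' : Under) (ex : x = x') (ey : y = y')
  (g : Hom x y) :
  proj1_sig (hcast ex ey g : UHom x' y') =
  hcast (f_equal (@projT1 _ _) ex) (f_equal (@projT1 _ _) ey) (proj1_sig g).
Proof. by destruct ex; destruct ey. Qed.
End Under.

Section Upre.
Variables (C : Cat) (b c : C) (beta : Hom b c).

Definition Upre_ob (x : @Under C c) : @Under C b :=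
  existT _ (projT1 x) (comp (projT2 x) beta).
Lemma Upre_proof (x y : @Under C c) (g : Hom x y) :
  comp (proj1_sig g) (projT2 (Upre_ob x)) = projT2 (Upre_ob y).
Proof. by rewrite /= compA (proj2_sig g). Qed.
Definition Upre_mor (x y : @Under C c) (g : Hom x y) :
  Hom (Upre_ob x) (Upre_ob y) := exist _ (proj1_sig g) (Upre_proof g).

Definition Upre : Functor (@Under C c) (@Under C b) :=
  {| fob := Upre_ob; fmor := Upre_mor;
     fmor_id := fun x => @sig_ext _ _ (Upre_mor (idm x)) (idm (Upre_ob x)) erefl;
     fmor_comp := fun x y z g f =>
        @sig_ext _ _ (Upre_mor (comp g f)) (comp (Upre_mor g) (Upre_mor f)) erefl |}.
End Upre.

Section Pullback.
Variables (X Y Z : sSet) (p : sMap X Z) (q : sMap Y Z).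

Definition Pb_x k := {xy : X k * Y k | p k xy.1 = q k xy.2}.
Lemma Pb_act_proof m n (f : Dmor m n) (xy : Pb_x n) :
  p m (sact f (proj1_sig xy).1) = q m (sact f (proj1_sig xy).2).
Proof. by rewrite !smap_nat (proj2_sig xy). Qed.
Definition Pb_act m n (f : Dmor m n) (xy : Pb_x n) : Pb_x m :=
  exist _ (sact f (proj1_sig xy).1, sact f (proj1_sig xy).2) (Pb_act_proof f xy).
Lemma Pb_act_id n (xy : Pb_x n) : Pb_act (Did n) xy = xy.
Proof. by apply: sig_ext; case: xy => [[x y] e] /=; rewrite !sact_id. Qed.
Lemma Pb_act_comp m n l (f : Dmor m n) (g : Dmor n l) (xy : Pb_x l) :
  Pb_act (Dcomp g f) xy = Pb_act f (Pb_act g xy).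
Proof. by apply: sig_ext; case: xy => [[x y] e] /=; rewrite !sact_comp. Qed.

Definition Pb : sSet :=
  {| sx := Pb_x; sact := Pb_act; sact_id := Pb_act_id; sact_comp := Pb_act_comp |}.
End Pullback.

Definition Disc (T : Type) : sSet :=
  {| sx := fun _ => T; sact := fun m n f x => x;
     sact_id := fun n x => erefl; sact_comp := fun m n p f g x => erefl |}.

Section Prod.
Variables (X Y : sSet).
Definition Prod_act m n (f : Dmor m n) (xy : X n * Y n) : X m * Y m :=
  (sact f xy.1, sact f xy.2).
Lemma Prod_act_id n (xy : X n * Y n) : Prod_act (Did n) xy = xy.
Proof. by case: xy => x y; rewrite /Prod_act /= !sact_id. Qed.
Lemma Prod_act_comp m n l (f : Dmor m n) (g : Dmor n l) (xy : X l * Y l) :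
  Prod_act (Dcomp g f) xy = Prod_act f (Prod_act g xy).
Proof. by case: xy => x y; rewrite /Prod_act /= !sact_comp. Qed.
Definition Prod : sSet :=
  {| sx := fun k => (X k * Y k)%type; sact := Prod_act;
     sact_id := Prod_act_id; sact_comp := Prod_act_comp |}.
End Prod.

Record PSh (C : Cat) := {
  pob :> C -> sSet;
  pmap : forall b c : C, Hom b c -> sMap (pob c) (pob b);
  pmap_id : forall (b : C) k (x : pob b k), pmap (idm b) k x = x;
  pmap_comp : forall (a b c : C) (f : Hom a b) (g : Hom b c) k (x : pob c k),
     pmap (comp g f) k x = pmap f k (pmap g k x) }.
Arguments pmap {C} _ {b c} _.

Record PNat (C : Cat) (P Q : PSh C) := {
  pnat :> forall b : C, sMap (P b) (Q b);
  pnat_nat : forall (b c : C) (f : Hom b c) k (x : P c k),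
     pnat b k (pmap P f k x) = pmap Q f k (pnat c k x) }.
Arguments pnat {C P Q} _ _.

Definition is_pushout (C : Cat) (P0 P1 P2 P3 : PSh C)
  (f1 : PNat P0 P1) (f2 : PNat P0 P2) (g1 : PNat P1 P3) (g2 : PNat P2 P3) : Prop :=
  (forall (b : C) k (x : P0 b k), g1 b k (f1 b k x) = g2 b k (f2 b k x)) /\
  forall (G : PSh C) (u1 : PNat P1 G) (u2 : PNat P2 G),
    (forall (b : C) k (x : P0 b k), u1 b k (f1 b k x) = u2 b k (f2 b k x)) ->
    exists v : PNat P3 G,
      (forall (b : C) k (x : P1 b k), v b k (g1 b k x) = u1 b k x) /\
      (forall (b : C) k (x : P2 b k), v b k (g2 b k x) = u2 b k x) /\
      (forall v' : PNat P3 G,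
         (forall (b : C) k (x : P1 b k), v' b k (g1 b k x) = u1 b k x) ->
         (forall (b : C) k (x : P2 b k), v' b k (g2 b k x) = u2 b k x) ->
         forall (b : C) k (x : P3 b k), v' b k x = v b k x).

Section Rep.
Variables (C : Cat) (c : C) (X : sSet).

Definition RepOb (b : C) : sSet := Prod (Disc (Hom b c)) X.
Definition Rep_map (b b' : C) (beta : Hom b b') : sMap (RepOb b') (RepOb b) :=
  @Build_sMap (RepOb b') (RepOb b)
    (fun k (gx : RepOb b' k) => (comp gx.1 beta, gx.2) : RepOb b k)
    (fun m n f x => erefl).
Lemma Rep_map_id (b : C) k (x : RepOb b k) : Rep_map (idm b) k x = x.
Proof. by case: x => g x; rewrite /= compm1. Qed.
Lemma Rep_map_comp (a b b' : C) (f : Hom a b) (g : Hom b b') k (x : RepOb b' k) :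
  Rep_map (comp g f) k x = Rep_map f k (Rep_map g k x).
Proof. by case: x => h x; rewrite /= compA. Qed.
Definition Rep : PSh C :=
  {| pob := RepOb; pmap := Rep_map; pmap_id := Rep_map_id;
     pmap_comp := Rep_map_comp |}.
End Rep.

Section RepMap.
Variables (C : Cat) (c : C) (X Y : sSet) (f : sMap X Y).
Definition RepMap_b (b : C) : sMap (Rep c X b) (Rep c Y b) :=
  @Build_sMap (Rep c X b) (Rep c Y b)
    (fun k (gx : Rep c X b k) => (gx.1, f k gx.2) : Rep c Y b k)
    (fun m n h gx => f_equal (pair gx.1) (smap_nat f h gx.2)).
Definition RepMap : PNat (Rep c X) (Rep c Y) :=
  {| pnat := RepMap_b; pnat_nat := fun b b' beta k x => erefl |}.
End RepMap.

(* The functor F phi : O^op -> S for phi : X -> N O:                     *)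
(*   (F phi)(b) = X x_{N O} N(b|O),                                     *)
(* functorial in b via precomposition c|O -> b|O.                       *)
Section Fpb.
Variables (C : Cat) (X : sSet) (phi : sMap X (Nerve C)).

Definition Fob (b : C) : sSet := Pb phi (NMap (Uforget b)).

Lemma forget_pre (b c : C) (beta : Hom b c) k (y : NSimp (Under c) k) :
  nfmap (Uforget b) (nfmap (Upre beta) y) = nfmap (Uforget c) y.
Proof.
by apply: (@NSimp_ext _ _ (nfmap (Uforget b) (nfmap (Upre beta) y))
   (nfmap (Uforget c) y) (fun i => erefl)).
Qed.

Lemma Fmap_proof (b c : C) (beta : Hom b c) k (xy : Fob c k) :
  phi k (proj1_sig xy).1 =
  NMap (Uforget b) k (NMap (Upre beta) k (proj1_sig xy).2).
Proof. by rewrite /= forget_pre (proj2_sig xy). Qed.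

Definition Fmap_fun (b c : C) (beta : Hom b c) k (xy : Fob c k) : Fob b k :=
  exist _ ((proj1_sig xy).1, NMap (Upre beta) k (proj1_sig xy).2)
    (Fmap_proof beta xy).

Lemma Fmap_nat (b c : C) (beta : Hom b c) m n (f : Dmor m n) (xy : Fob c n) :
  Fmap_fun beta (sact f xy) = sact f (Fmap_fun beta xy).
Proof. by apply: sig_ext; rewrite /= nfmap_nat. Qed.

Definition Fmap (b c : C) (beta : Hom b c) : sMap (Fob c) (Fob b) :=
  @Build_sMap (Fob c) (Fob b) (@Fmap_fun b c beta) (@Fmap_nat b c beta).

Lemma Upre_id_ob (b : C) (x : Under b) : Upre_ob (idm b) x = x.
Proof. by case: x => d g; rewrite /Upre_ob /= compm1. Qed.

Lemma Upre_id (b : C) k (y : NSimp (Under b) k) : nfmap (Upre (idm b)) y = y.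
Proof.
apply: (@NSimp_ext _ _ (nfmap (Upre (idm b)) y) y
          (fun i => Upre_id_ob (nob y i))) => i j h.
by apply: sig_ext; rewrite sval_hcast hcast_refl.
Qed.

Lemma Upre_comp_ob (a b c : C) (f : Hom a b) (g : Hom b c) (x : Under c) :
  Upre_ob (comp g f) x = Upre_ob f (Upre_ob g x).
Proof. by case: x => d h; rewrite /Upre_ob /= compA. Qed.

Lemma Upre_comp (a b c : C) (f : Hom a b) (g : Hom b c) k
  (y : NSimp (Under c) k) :
  nfmap (Upre (comp g f)) y = nfmap (Upre f) (nfmap (Upre g) y).
Proof.
apply: (@NSimp_ext _ _ (nfmap (Upre (comp g f)) y)
          (nfmap (Upre f) (nfmap (Upre g) y))
          (fun i => Upre_comp_ob f g (nob y i))) => i j h.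
by apply: sig_ext; rewrite sval_hcast hcast_refl.
Qed.

Lemma Fmap_id (b : C) k (x : Fob b k) : Fmap (idm b) k x = x.
Proof.
by apply: sig_ext; case: x => [[x y] e] /=; rewrite Upre_id.
Qed.

Lemma Fmap_comp (a b c : C) (f : Hom a b) (g : Hom b c) k (x : Fob c k) :
  Fmap (comp g f) k x = Fmap f k (Fmap g k x).
Proof.
by apply: sig_ext; case: x => [[x y] e] /=; rewrite Upre_comp.
Qed.

Definition Fpb : PSh C :=
  {| pob := Fob; pmap := Fmap; pmap_id := Fmap_id; pmap_comp := Fmap_comp |}.
End Fpb.

Section FpbMap.
Variables (C : Cat) (X Y : sSet) (f : sMap X Y)
  (phi : sMap X (Nerve C)) (psi : sMap Y (Nerve C))
  (H : forall k (x : X k), psi k (f k x) = phi k x).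

Lemma FpbMap_proof (b : C) k (xy : Fob phi b k) :
  psi k (f k (proj1_sig xy).1) = NMap (Uforget b) k (proj1_sig xy).2.
Proof. by rewrite H (proj2_sig xy). Qed.
Definition FpbMap_fun (b : C) k (xy : Fob phi b k) : Fob psi b k :=
  exist _ (f k (proj1_sig xy).1, (proj1_sig xy).2) (FpbMap_proof xy).
Lemma FpbMap_nat (b : C) m n (h : Dmor m n) (xy : Fob phi b n) :
  FpbMap_fun (sact h xy) = sact h (FpbMap_fun xy).
Proof. by apply: sig_ext; rewrite /= smap_nat. Qed.
Definition FpbMap_b (b : C) : sMap (Fob phi b) (Fob psi b) :=
  @Build_sMap (Fob phi b) (Fob psi b) (@FpbMap_fun b) (@FpbMap_nat b).
Lemma FpbMap_natb (b c : C) (beta : Hom b c) k (x : Fob phi c k) :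
  FpbMap_b b k (Fmap phi beta k x) = Fmap psi beta k (FpbMap_b c k x).
Proof. by apply: sig_ext. Qed.
Definition FpbMap : PNat (Fpb phi) (Fpb psi) :=
  @Build_PNat C (Fpb phi) (Fpb psi) FpbMap_b FpbMap_natb.
End FpbMap.

(* The map iota_n : O(-, sigma_0) x Delta[n] -> F sigma, in the general  *)
(* form O(-, sigma_0) x X -> F lam for a : X -> Delta[n] and            *)
(* lam = sigma o a.                                                     *)
Section Iota.
Variables (C : Cat) (n : nat) (sigma : sMap (Delta n) (Nerve C)).

(* sigma as a functor [n] -> O, i.e. the sequence sigma_0 -> ... -> sigma_n *)
Definition sseq : NSimp C n := sigma n (Did n).
Definition sigma0 : C := nob sseq ord0.

Definition Lz k (a : Dmor k n) (i : 'I_k.+1) : (@ord0 n) <= a i := leq0n (a i).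

Section Omega.
Variables (b : C) (g : Hom b sigma0) (k : nat) (a : Dmor k n).

Definition om_ob (i : 'I_k.+1) : Under b :=
  existT _ (nob sseq (a i)) (comp (nmor sseq (Lz a i)) g).
Lemma om_proof (i j : 'I_k.+1) (h : i <= j) :
  comp (nmor sseq (Dmono a h)) (projT2 (om_ob i)) = projT2 (om_ob j).
Proof. by rewrite /= compA -(nmor_comp sseq (Lz a i) (Dmono a h) (Lz a j)). Qed.
Definition om_mor (i j : 'I_k.+1) (h : i <= j) : Hom (om_ob i) (om_ob j) :=
  exist _ (nmor sseq (Dmono a h)) (om_proof h).
Lemma om_id (i : 'I_k.+1) (h : i <= i) : om_mor h = idm (om_ob i).
Proof. by apply: sig_ext; rewrite /= nmor_id. Qed.
Lemma om_comp (i j l : 'I_k.+1) (hij : i <= j) (hjl : j <= l) (hil : i <= l) :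
  om_mor hil = comp (om_mor hjl) (om_mor hij).
Proof. by apply: sig_ext; rewrite /= (nmor_comp sseq (Dmono a hij) (Dmono a hjl)). Qed.

(* omega = (b -> sigma a(0) -> sigma a(1) -> ... -> sigma a(k)), the first map
   being sigma(0 -> a(0)) o g, as a k-simplex of N(b|O) *)
Definition omega : NSimp (Under b) k :=
  {| nob := om_ob; nmor := om_mor; nmor_id := om_id; nmor_comp := om_comp |}.

Lemma forget_omega : nfmap (Uforget b) omega = sigma k a.
Proof.
have -> : sigma k a = sigma k (sact (s := Delta n) a (Did n)).
  by congr (sigma k _); apply: Dmor_eq.
rewrite smap_nat.
apply: (@NSimp_ext _ _ (nfmap (Uforget b) omega) (nact a sseq)
          (fun i => erefl)) => i j h /=; exact: nmor_pi.
Qed.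
End Omega.

Variables (X : sSet) (a : sMap X (Delta n)) (lam : sMap X (Nerve C))
  (H : forall k (x : X k), lam k x = sigma k (a k x)).

Lemma iota_proof (b : C) k (gx : Rep sigma0 X b k) :
  lam k gx.2 = NMap (Uforget b) k (omega gx.1 (a k gx.2)).
Proof. by rewrite H /= forget_omega. Qed.
Definition iota_fun (b : C) k (gx : Rep sigma0 X b k) : Fob lam b k :=
  exist _ (gx.2, omega gx.1 (a k gx.2)) (iota_proof gx).

Lemma omega_nat (b : C) (g : Hom b sigma0) m k (f : Dmor m k) (al : Dmor k n) :
  omega g (Dcomp al f) = nact f (omega g al).
Proof.
apply: (@NSimp_ext _ _ (omega g (Dcomp al f)) (nact f (omega g al))
          (fun i => erefl)) => i j h /=.
by apply: sig_ext => /=; exact: nmor_pi.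
Qed.

Lemma iota_nat (b : C) m k (f : Dmor m k) (gx : Rep sigma0 X b k) :
  iota_fun (sact f gx) = sact f (iota_fun gx).
Proof.
apply: sig_ext => /=; congr pair.
by rewrite (smap_nat a) /= omega_nat.
Qed.

Definition iota_b (b : C) : sMap (Rep sigma0 X b) (Fob lam b) :=
  @Build_sMap (Rep sigma0 X b) (Fob lam b) (@iota_fun b) (@iota_nat b).

Lemma omega_pre_ob (b c : C) (beta : Hom b c) (g : Hom c sigma0) k
  (al : Dmor k n) (i : 'I_k.+1) :
  nob (omega (comp g beta) al) i = nob (nfmap (Upre beta) (omega g al)) i.
Proof. by rewrite /= /om_ob /Upre_ob /= compA. Qed.

Lemma omega_pre (b c : C) (beta : Hom b c) (g : Hom c sigma0) k (al : Dmor k n) :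
  omega (comp g beta) al = nfmap (Upre beta) (omega g al).
Proof.
apply: (@NSimp_ext _ _ (omega (comp g beta) al) (nfmap (Upre beta) (omega g al))
          (omega_pre_ob beta g al)) => i j h.
by apply: sig_ext; rewrite sval_hcast hcast_refl.
Qed.

Lemma iota_natb (b c : C) (beta : Hom b c) k (gx : Rep sigma0 X c k) :
  iota_b b k (pmap (Rep sigma0 X) beta k gx) = Fmap lam beta k (iota_b c k gx).
Proof. by apply: sig_ext => /=; rewrite omega_pre. Qed.

Definition iota_gen : PNat (Rep sigma0 X) (Fpb lam) :=
  @Build_PNat C (Rep sigma0 X) (Fpb lam) iota_b iota_natb.
End Iota.

Section Square.
Variables (C : Cat) (n : nat) (sigma : sMap (Delta n) (Nerve C))
  (A : SubS (Delta n)).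

Definition lambda : sMap (subsSet A) (Nerve C) := smcomp sigma (incl A).

Definition iota_n : PNat (Rep (sigma0 sigma) (Delta n)) (Fpb sigma) :=
  @iota_gen C n sigma (Delta n) (smid (Delta n)) sigma (fun k x => erefl).

Definition sq_top : PNat (Rep (sigma0 sigma) (subsSet A)) (Fpb lambda) :=
  @iota_gen C n sigma (subsSet A) (incl A) lambda (fun k x => erefl).

Definition sq_left :
  PNat (Rep (sigma0 sigma) (subsSet A)) (Rep (sigma0 sigma) (Delta n)) :=
  RepMap (sigma0 sigma) (incl A).

Definition sq_right : PNat (Fpb lambda) (Fpb sigma) :=
  @FpbMap C (subsSet A) (Delta n) (incl A) lambda sigma (fun k x => erefl).

Lemma sq_top_restricts (b : C) k (x : Rep (sigma0 sigma) (subsSet A) b k) :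
  sq_right b k (sq_top b k x) = iota_n b k (sq_left b k x).
Proof. by apply: sig_ext. Qed.
End Square.

(* A k-simplex (a, w) of (F sigma)(b) is a lift w of sigma a to b|O, and such
   a lift is determined by its image in N O together with its structure map
   b -> sigma a(0).  Since A contains the face opposite 0, every simplex a
   outside A has a(0) = 0, so (a, w) = iota_n (g, a) for a unique g.  Thus
   F sigma is F lambda with the simplices of O(-, sigma_0) x (Delta[n] \ A)
   attached freely along iota_n, which is exactly the pushout. *)
From Stdlib Require Import ProofIrrelevance ClassicalEpsilon Classical.
From mathcomp Require Import all_boot.

Set Implicit Arguments.
Unset Strict Implicit.
Unset Printing Implicit Defensive.

Section PushoutCriterion.
Variables (C : Cat) (P0 P1 P2 P3 : PSh C).
Variables (f1 : PNat P0 P1) (f2 : PNat P0 P2) (g1 : PNat P1 P3) (g2 : PNat P2 P3).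

Hypothesis square_comm :
  forall b k (w : P0 b k), g1 b k (f1 b k w) = g2 b k (f2 b k w).
Hypothesis g1_inj : forall b k (y y' : P1 b k), g1 b k y = g1 b k y' -> y = y'.
Hypothesis g2_eq : forall b k (x x' : P2 b k),
  g2 b k x = g2 b k x' -> x = x' \/ exists y, g1 b k y = g2 b k x.
Hypothesis g1_g2_eq : forall b k (y : P1 b k) (x : P2 b k),
  g1 b k y = g2 b k x -> exists w, f1 b k w = y /\ f2 b k w = x.
Hypothesis g1_g2_cover : forall b k (z : P3 b k),
  (exists y, g1 b k y = z) \/ (exists x, g2 b k x = z).

Section Glue.
Variables (G : PSh C) (u1 : PNat P1 G) (u2 : PNat P2 G).
Hypothesis u_comm : forall b k (w : P0 b k), u1 b k (f1 b k w) = u2 b k (f2 b k w).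

Lemma u1_u2_agree b k (y : P1 b k) (x : P2 b k) :
  g1 b k y = g2 b k x -> u1 b k y = u2 b k x.
Proof. by move=> /g1_g2_eq [w [<- <-]]. Qed.

Lemma u2_agree b k (x x' : P2 b k) : g2 b k x = g2 b k x' -> u2 b k x = u2 b k x'.
Proof.
move=> E; case: (g2_eq E) => [-> // | [y Ey]].
by rewrite -(u1_u2_agree Ey) (u1_u2_agree (etrans Ey E)).
Qed.

Lemma glue_value_exists b k (z : P3 b k) :
  exists v, (forall y, g1 b k y = z -> v = u1 b k y) /\
            (forall x, g2 b k x = z -> v = u2 b k x).
Proof.
case: (g1_g2_cover z) => [[y <-] | [x <-]].
- exists (u1 b k y); split=> [y' /g1_inj -> // | x /esym]; exact: u1_u2_agree.
- exists (u2 b k x); split=> [y /u1_u2_agree -> // | x' /esym]; exact: u2_agree.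
Qed.

Definition glue b k (z : P3 b k) : G b k :=
  proj1_sig (constructive_indefinite_description _ (glue_value_exists z)).

Lemma glue_g1 b k (y : P1 b k) : glue (g1 b k y) = u1 b k y.
Proof. by rewrite /glue; case: constructive_indefinite_description => v /= [Hv _]; exact: Hv. Qed.

Lemma glue_g2 b k (x : P2 b k) : glue (g2 b k x) = u2 b k x.
Proof. by rewrite /glue; case: constructive_indefinite_description => v /= [_ Hv]; exact: Hv. Qed.

Lemma glue_sact b m k (f : Dmor m k) (z : P3 b k) :
  glue (sact f z) = sact f (glue z).
Proof.
case: (g1_g2_cover z) => [[y <-] | [x <-]].
- by rewrite -(smap_nat (g1 b)) !glue_g1 smap_nat.
- by rewrite -(smap_nat (g2 b)) !glue_g2 smap_nat.
Qed.

Lemma glue_pmap b c (beta : Hom b c) k (z : P3 c k) :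
  glue (pmap P3 beta k z) = pmap G beta k (glue z).
Proof.
case: (g1_g2_cover z) => [[y <-] | [x <-]].
- by rewrite -pnat_nat !glue_g1 pnat_nat.
- by rewrite -pnat_nat !glue_g2 pnat_nat.
Qed.

Definition glue_pnat : PNat P3 G :=
  {| pnat := fun b => {| smap := @glue b; smap_nat := @glue_sact b |};
     pnat_nat := glue_pmap |}.
End Glue.

Lemma pushout_criterion : is_pushout f1 f2 g1 g2.
Proof.
split=> // G u1 u2 u_comm; exists (glue_pnat u_comm); split; [|split].
- exact: glue_g1.
- exact: glue_g2.
- move=> v' v'_g1 v'_g2 b k z /=.
  by case: (g1_g2_cover z) => [[y <-] | [x <-]];
    rewrite ?v'_g1 ?glue_g1 ?v'_g2 ?glue_g2.
Qed.
End PushoutCriterion.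

Section UnderLift.
Variables (C : Cat) (b : C) (k : nat) (x : NSimp C k) (m : Hom b (nob x ord0)).

Definition ulift_ob (i : 'I_k.+1) : Under b :=
  existT (fun c => Hom b c) (nob x i) (comp (nmor x (leq0n i : (@ord0 k) <= i)) m).

Lemma ulift_proof (i j : 'I_k.+1) (h : i <= j) :
  comp (nmor x h) (projT2 (ulift_ob i)) = projT2 (ulift_ob j).
Proof. by rewrite /= compA -(nmor_comp x _ _ (leq0n j : (@ord0 k) <= j)). Qed.

Definition ulift_mor (i j : 'I_k.+1) (h : i <= j) : Hom (ulift_ob i) (ulift_ob j) :=
  exist _ (nmor x h) (ulift_proof h).

Lemma ulift_id (i : 'I_k.+1) (h : i <= i) : ulift_mor h = idm (ulift_ob i).
Proof. by apply: sig_ext; rewrite /= nmor_id. Qed.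

Lemma ulift_comp (i j l : 'I_k.+1) (hij : i <= j) (hjl : j <= l) (hil : i <= l) :
  ulift_mor hil = comp (ulift_mor hjl) (ulift_mor hij).
Proof. by apply: sig_ext; rewrite /= (nmor_comp x hij hjl hil). Qed.

Definition ulift : NSimp (Under b) k :=
  {| nob := ulift_ob; nmor := ulift_mor; nmor_id := ulift_id;
     nmor_comp := ulift_comp |}.
End UnderLift.

Section UnderSimplex.
Variables (C : Cat) (b : C) (k : nat).

Lemma ulift_eta (y : NSimp (Under b) k) :
  y = ulift (x := nfmap (Uforget b) y) (projT2 (nob y ord0)).
Proof.
have e i : nob y i = nob (ulift (x := nfmap (Uforget b) y) (projT2 (nob y ord0))) i.
  rewrite /= /ulift_ob /= (proj2_sig (nmor y (leq0n i : (@ord0 k) <= i))).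
  exact: sigT_eta.
apply: (@NSimp_ext _ _ _ _ e) => i j h; apply: sig_ext.
by rewrite sval_hcast hcast_refl.
Qed.

Lemma ulift_congr (x x' : NSimp C k) (m : Hom b (nob x ord0)) (m' : Hom b (nob x' ord0)) :
  x = x' -> existT (fun c => Hom b c) (nob x ord0) m = existT _ (nob x' ord0) m' ->
  ulift m = ulift m'.
Proof. by move=> E; subst x' => Em; rewrite (inj_pair2 _ _ _ _ _ Em). Qed.

Lemma under_simplex_ext (y y' : NSimp (Under b) k) :
  nfmap (Uforget b) y = nfmap (Uforget b) y' -> nob y ord0 = nob y' ord0 -> y = y'.
Proof.
move=> E E0; rewrite [LHS]ulift_eta [RHS]ulift_eta; apply: ulift_congr E _.
by rewrite -!sigT_eta.
Qed.

Lemma under_ob_eq (u : Under b) (c : C) :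
  projT1 u = c -> exists g : Hom b c, u = existT _ c g.
Proof. by case: u => c' g /= <-; exists g. Qed.
End UnderSimplex.

Section OmegaLift.
Variables (O : Cat) (n : nat) (sigma : sMap (Delta n) (Nerve O)) (b : O) (k : nat)
  (a : Dmor k n).

Lemma sigma_nact : sigma k a = nact a (sseq sigma).
Proof.
transitivity (sigma k (sact (s := Delta n) a (Did n))).
  by congr (sigma k _); apply: Dmor_eq.
exact: smap_nat.
Qed.

Hypothesis a0 : a ord0 = ord0.

Lemma omega_vertex0 (g : Hom b (sigma0 sigma)) :
  nob (omega g a) ord0 = existT _ (sigma0 sigma) g.
Proof.
rewrite /= /om_ob; move: (Lz a ord0); rewrite a0 => h.
by rewrite nmor_id comp1m.
Qed.

Lemma omega_inj (g g' : Hom b (sigma0 sigma)) : omega g a = omega g' a -> g = g'.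
Proof.
move=> /(f_equal (fun y => nob y ord0)); rewrite !omega_vertex0.
exact: inj_pair2.
Qed.

Lemma omega_lift (w : NSimp (Under b) k) :
  nfmap (Uforget b) w = sigma k a -> exists g : Hom b (sigma0 sigma), omega g a = w.
Proof.
move=> Ew; have [g Eg] : exists g, nob w ord0 = existT _ (sigma0 sigma) g.
  apply: under_ob_eq.
  by rewrite -[projT1 _]/(nob (nfmap (Uforget b) w) ord0) Ew sigma_nact /= a0.
exists g; apply: under_simplex_ext; first by rewrite forget_omega Ew.
by rewrite omega_vertex0 Eg.
Qed.
End OmegaLift.

Lemma nmem_vertex0 n (A : SubS (Delta n)) (HA : subS_le (face0 n) A) k (a : Dmor k n) :
  ~ smem A a -> a ord0 = ord0.
Proof.
move=> nAa; have /not_all_ex_not [i /NNPP ai0] : ~ (forall i, nat_of_ord (a i) <> 0).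
  by move=> a_face0; apply/nAa/HA.
apply: val_inj; apply/eqP; rewrite /= -leqn0 -ai0.
exact: (Dmono a (leq0n i : (@ord0 k) <= i)).
Qed.

Section Square.
Variables (O : Cat) (n : nat) (sigma : sMap (Delta n) (Nerve O)) (A : SubS (Delta n)).
Hypothesis HA : subS_le (face0 n) A.

Lemma sq_right_inj b k (y y' : Fpb (lambda sigma A) b k) :
  sq_right sigma A b k y = sq_right sigma A b k y' -> y = y'.
Proof.
case: y => [[[a Ha] w] P]; case: y' => [[[a' Ha'] w'] P'].
move=> /(f_equal (@proj1_sig _ _)) /= [Ea Ew]; subst a' w'.
by apply: sig_ext; congr pair; apply: sig_ext.
Qed.

Lemma iota_n_eq b k (x x' : Rep (sigma0 sigma) (Delta n) b k) :
  iota_n sigma b k x = iota_n sigma b k x' ->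
  x = x' \/ exists y, sq_right sigma A b k y = iota_n sigma b k x.
Proof.
case: x x' => g a [g' a'] E.
have /= Ea := f_equal (fun z => (proj1_sig z).1) E; subst a'.
have Ew : omega g a = omega g' a := f_equal (fun z => (proj1_sig z).2) E.
case: (classic (smem A a)) => Ha.
- by right; exists (sq_top sigma A b k (g, exist _ a Ha)); exact: sq_top_restricts.
- by left; rewrite (omega_inj (nmem_vertex0 HA Ha) Ew).
Qed.

Lemma sq_right_iota_n b k (y : Fpb (lambda sigma A) b k)
  (x : Rep (sigma0 sigma) (Delta n) b k) :
  sq_right sigma A b k y = iota_n sigma b k x ->
  exists w, sq_top sigma A b k w = y /\ sq_left sigma A b k w = x.
Proof.
case: y x => [[[a Ha] w] P] [g a'] /(f_equal (@proj1_sig _ _)) /= [Ea Ew].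
subst a' w; exists (g, exist _ a Ha); split=> //.
exact: sig_ext.
Qed.

Lemma sq_right_iota_n_cover b k (z : Fpb sigma b k) :
  (exists y, sq_right sigma A b k y = z) \/ (exists x, iota_n sigma b k x = z).
Proof.
case: z => [[a w] P]; case: (classic (smem A a)) => Ha.
- by left; exists (exist _ (exist _ a Ha, w) P); apply: sig_ext.
- have [g Eg] := omega_lift (nmem_vertex0 HA Ha) (esym P).
  by right; exists (g, a); apply: sig_ext; rewrite /= Eg.
Qed.
End Square.

Theorem lemma2p2 (O : Cat) (n : nat) (sigma : sMap (Delta n) (Nerve O))
  (A : SubS (Delta n)) (HA : subS_le (face0 n) A) :
  is_pushout (sq_top sigma A) (sq_left sigma A) (sq_right sigma A) (iota_n sigma).
Proof.
apply: pushout_criterion.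
- exact: sq_top_restricts.
- exact: sq_right_inj.
- exact: iota_n_eq.
- exact: sq_right_iota_n.
- exact: sq_right_iota_n_cover.
Qed.
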